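(* Let $\eta$ be a nonnegative integer valued random variable with $P(\eta=0)<1$ and let $(p_n)$ be a sequence in $(0,1]$ with $\lim_{n\to\infty}p_n=1$. Consider the auxiliary process on the complete graph $\mathcal{K}_{n+1}$ with survival parameter $p_n$, in which the $\eta_v$ are i.i.d. with the distribution of $\eta$. Then for every $c\in(0,1)$, \[\lim_{n\to\infty}P\big(R(\mathcal{K}_{n+1},p_n)<k_1\big)=0,\qquad\text{where }k_1=k_1(n)=\lfloor cn\rfloor-1.\]
   Context: Auxiliary process on a connected graph $\mathcal{G}=(\mathcal{V},\mathcal{E})$ (here the complete graph $\mathcal{K}_{n+1}$ on $n+1$ vertices, in which a step goes to a uniformly chosen vertex other than the current one) with root $o$ and survival parameter $p$: each $v\neq o$ initially carries $\eta_v$ inactive particles and $o$ carries $1+\eta_o$ active particles (the original particles). At each round $k=1,2,\dots$ exactly one active particle is chosen (by an arbitrary rule) to participate; independently of everything else it survives with probability $p$, in which case it moves to a uniformly chosen neighbouring vertex and activates all inactive particles there, and otherwise it dies and is removed. When the last living original active particle dies, all remaining inactive particles are called extra and a new extra active particle is injected at $o$; afterwards, each time the only living active particle dies, a new extra active particle is injected at $o$. For round $k$ define $X_k=0$ if the participating particle dies; $X_k=1$ if it survives and moves to a previously visited vertex or to a never-visited vertex $v$ with $\eta_v=0$; $X_k=j\geq2$ if it survives and moves to a never-visited vertex $v$ with $\eta_v=j-1$. Set $A'_0=1+\eta_o$, $A'_k=1+\eta_o+\sum_{j=1}^k(X_j-1)$, and $R=R(\mathcal{G},p)=\inf\{k:A'_k=0\}$.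 *)

From HB Require Import structures.
From mathcomp Require Import all_boot all_order all_algebra.
From mathcomp Require Import all_classical all_reals all_analysis.
Set Implicit Arguments. Unset Strict Implicit. Unset Printing Implicit Defensive.
Import Order.TTheory GRing.Theory Num.Theory.
Import numFieldNormedType.Exports.
Local Open Scope ring_scope.

(* Vertices are 'I_n.+1, the root o is ord0.  A configuration records the
   number of ACTIVE particles at each vertex and the set of visited vertices.
   (On a visited vertex all inactive particles have been activated, so no
   inactive particle remains there; the inactive particles of a never-visited
   vertex v are the eta_v, revealed (sampled from the law of eta,
   independently) when v is first visited.) *)
Section AuxProcess.
Variables (R : realType) (n : nat).
Variable (p : R).
Variable (q : nat -> R).     (* law of eta: q j = P(eta = j) *)

Definition config := ({ffun 'I_n.+1 -> nat} * {set 'I_n.+1})%type.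

(* An arbitrary (history dependent, deterministic) rule: given the history of
   configurations (ending with the current one), it proposes a vertex whose
   active particle participates. *)
Definition rule := seq config -> 'I_n.+1.

Definition nactive (s : config) : nat := (\sum_(v < n.+1) s.1 v)%N.

Definition chosen (r : rule) (hist : seq config) (s : config) : 'I_n.+1 :=
  let v := r (rcons hist s) in
  if (0 < s.1 v)%N then v else odflt ord0 [pick u | (0 < s.1 u)%N].

Definition addat (a : {ffun 'I_n.+1 -> nat}) (w : 'I_n.+1) (k : nat) :=
  [ffun u => if u == w then (a u + k)%N else a u].
Definition remat (a : {ffun 'I_n.+1 -> nat}) (v : 'I_n.+1) :=
  [ffun u => if u == v then (a u).-1 else a u].

(* hitprob r t hist s = probability that, starting from configuration s
   (with past history hist), the number of active particles is 0 at one of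
   the current or next t-1 times, i.e. A'_m = 0 for some of the t times
   m, m+1, ..., m+t-1.  One round: the chosen particle dies w.p. 1-p; else
   it moves to a uniform neighbour w (one of the n vertices w <> v); if w
   was never visited, its eta_w = j inactive particles (law q) are activated. *)
Fixpoint hitprob (r : rule) (t : nat) (hist : seq config) (s : config) : R :=
  match t with
  | 0 => 0
  | t'.+1 =>
    if nactive s == 0%N then 1 else
    let v := chosen r hist s in
    let hist' := rcons hist s in
    let a := remat s.1 v in
    (1 - p) * hitprob r t' hist' (a, s.2)
    + p * \sum_(w < n.+1 | w != v) n%:R^-1 *
        (if w \in s.2 then hitprob r t' hist' (addat a w 1, s.2)
         else limn (series (fun j => q j * hitprob r t' hist' (addat a w j.+1, w |: s.2))))
  end.

(* initial configuration when eta_o = j: 1 + j active particles at the root *)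
Definition init_config (j : nat) : config :=
  ([ffun u => if u == ord0 then j.+1 else 0%N], [set ord0]).

(* P(R < k), where R = inf {k : A'_k = 0} *)
Definition prob_R_lt (r : rule) (k : nat) : R :=
  limn (series (fun j => q j * hitprob r k [::] (init_config j))).

End AuxProcess.

(* k_1(n) = floor(c n) - 1  (truncated at 0; for k <= 0, P(R < k) = 0 anyway) *)
Definition k1 (R : realType) (c : R) (n : nat) : nat :=
  (Num.truncn (c * n%:R)).-1.

(* Write A' for the number of active particles and V for the set of visited
   vertices.  For 0 < x <= 1, as long as #|V| <= c n every surviving particle
   lands on an unvisited vertex with probability at least 1 - c, and there
   E[x^(eta + 1)] <= x (1 - (1 - x)(1 - P(eta = 0))).  Hence
   E[x^(A'_(k+1)) | past] <= x^(A'_k) as soon as the death probability 1 - p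
   is at most p (1 - c)(1 - x)(1 - P(eta = 0)) x, which holds for large n
   since p_n -> 1.  Up to time k1 the process therefore reaches 0 with
   probability at most E[x^(A'_0)] <= x, and x can be taken arbitrarily small. *)
From HB Require Import structures.
From mathcomp Require Import all_boot all_order all_algebra.
From mathcomp Require Import all_classical all_reals all_analysis.
From mathcomp Require Import ring lra zify.
Import Order.TTheory GRing.Theory Num.Theory.
Import numFieldNormedType.Exports.
Local Open Scope classical_set_scope.
Local Open Scope ring_scope.
Set Implicit Arguments. Unset Strict Implicit. Unset Printing Implicit Defensive.

Section NonnegativeSeries.
Variable R : realType.
Implicit Types (u : nat -> R) (l B : R).

Lemma series_le_lim u l : (forall j, 0 <= u j) -> series u @ \oo --> l ->
  forall N, series u N <= l.
Proof.
move=> u_ge0 u_cvg N; rewrite -(cvg_lim _ u_cvg) //.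
apply: nondecreasing_cvgn_le; last by apply/cvg_ex; exists l.
by apply: nondecreasing_series => k _ _; apply: u_ge0.
Qed.

Lemma limn_series_ge0_le u B : (forall j, 0 <= u j) ->
  (forall N, series u N <= B) -> 0 <= limn (series u) <= B.
Proof.
move=> u_ge0 le_uB.
have u_cvg : cvgn (series u).
  apply: nondecreasing_is_cvgn; first by apply: nondecreasing_series => k _ _.
  by exists B => _ [N _ <-].
apply/andP; split; last by apply: limr_le => //; near=> N; apply: le_uB.
by apply: limr_ge => //; near=> N; apply: sumr_ge0 => j _.
Unshelve. all: by end_near. Qed.

Lemma series_pgf_le (q : nat -> R) x : 0 <= x <= 1 -> (forall j, 0 <= q j) ->
  (forall N, series q N <= 1) ->
  forall N, series (fun j => q j * x ^+ j) N <= 1 - (1 - x) * (1 - q 0%N).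
Proof.
move=> /andP[x_ge0 x_le1] q_ge0 q_le1 [|N].
  by rewrite /series /= big_geq //; have := q_ge0 0%N; nra.
have := q_le1 N.+1; rewrite /series /= !big_nat_recl //= expr0 mulr1.
set T := \sum_(0 <= i < N) q i.+1 => le_q0T_1.
have T_ge0 : 0 <= T by apply: sumr_ge0 => i _.
have : \sum_(0 <= i < N) q i.+1 * x ^+ i.+1 <= x * T.
  rewrite big_distrr /=; apply: ler_sum => i _; rewrite mulrC ler_wpM2r //.
  by rewrite exprS -[leRHS]mulr1 ler_wpM2l // exprn_ile1.
nra.
Qed.

(* [a + j] is the number of active particles after an unvisited vertex
   carrying [eta = j] inactive particles has been reached. *)
Lemma limn_series_le_pgf (q u : nat -> R) x a : 0 <= x <= 1 ->
  (forall j, 0 <= q j) -> (forall N, series q N <= 1) ->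
  (forall j, 0 <= u j <= q j * x ^+ (a + j)) ->
  limn (series u) <= x ^+ a * (1 - (1 - x) * (1 - q 0%N)).
Proof.
move=> x01 q_ge0 q_le1 u_bnd; have /andP[x_ge0 _] := x01.
suff le_N : forall N, series u N <= x ^+ a * (1 - (1 - x) * (1 - q 0%N)).
  by case/andP: (limn_series_ge0_le (fun j => proj1 (andP (u_bnd j))) le_N).
move=> N; have := ler_wpM2l (exprn_ge0 a x_ge0) (series_pgf_le x01 q_ge0 q_le1 N).
apply: le_trans.
rewrite /series /= big_distrr /=; apply: ler_sum => j _.
by have /andP[_ /le_trans->] := u_bnd j; rewrite // exprD mulrCA.
Qed.

End NonnegativeSeries.

Section CompleteGraph.
Variables (R : realType) (n : nat).

Lemma sumr_neq (v : 'I_n.+1) (F : 'I_n.+1 -> R) :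
  \sum_(w < n.+1 | w != v) F w = \sum_(w < n.+1) F w - F v.
Proof. by rewrite [in RHS](bigD1 v) //= addrC addrK. Qed.

Lemma sumr_neq_const (v : 'I_n.+1) (c : R) :
  \sum_(w < n.+1 | w != v) c = c * n%:R.
Proof. by rewrite sumr_neq sumr_const card_ord mulrSr addrK mulr_natr. Qed.

(* A step from [v] reaches an unvisited vertex, whose weight is [1 - D],
   with probability at least [(n - #|S|) / n]. *)
Lemma mean_neighbour_le (S : {set 'I_n.+1}) (v : 'I_n.+1) (D : R) :
  (0 < n)%N -> 0 <= D ->
  n%:R^-1 * \sum_(w < n.+1 | w != v) (if w \in S then 1 else 1 - D)
    <= 1 - (n%:R - #|S|%:R) / n%:R * D.
Proof.
move=> n_gt0 D_ge0.
have sum_all : \sum_(w < n.+1) (if w \in S then 1 else 1 - D)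
    = #|S|%:R + (1 - D) * #|~: S|%:R.
  rewrite (bigID (mem S)) /=; congr (_ + _).
    by rewrite (eq_bigr (fun _ => 1)) => [|w ->] //; rewrite sumr_const.
  rewrite (eq_bigr (fun _ => 1 - D)) => [|w /negbTE ->] //.
  rewrite (eq_bigl (mem (~: S))) => [|w]; last by rewrite !inE.
  by rewrite sumr_const mulr_natr.
have card_compl : #|~: S|%:R = n%:R + 1 - #|S|%:R :> R.
  have /(congr1 (GRing.natmul (1 : R))) : (#|S| + #|~: S| = n + 1)%N.
    by rewrite cardsC card_ord addn1.
  rewrite !natrD; lra.
have f_v : 1 - D <= (if v \in S then 1 else 1 - D) by case: ifP => _; lra.
have n_neq0 : n%:R != 0 :> R by rewrite pnatr_eq0 -lt0n.
have -> : 1 - (n%:R - #|S|%:R) / n%:R * D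
    = n%:R^-1 * (n%:R - D * (n%:R - #|S|%:R)) by field.
rewrite ler_wpM2l ?invr_ge0 // sumr_neq sum_all card_compl; lra.
Qed.

Lemma nactive_remat (a : {ffun 'I_n.+1 -> nat}) v S : (0 < a v)%N ->
  nactive (remat a v, S) = (nactive (a, S)).-1.
Proof.
move=> a_v; rewrite /nactive /= (bigD1 v) //= [in RHS](bigD1 v) //= ffunE eqxx.
rewrite (eq_bigr a) => [|u /negbTE u_v]; last by rewrite ffunE u_v.
by case: (a v) a_v.
Qed.

Lemma nactive_addat (a : {ffun 'I_n.+1 -> nat}) w k S :
  nactive (addat a w k, S) = (nactive (a, S) + k)%N.
Proof.
rewrite /nactive /= (bigD1 w) //= [in RHS](bigD1 w) //= ffunE eqxx.
rewrite (eq_bigr a) => [|u /negbTE u_w]; last by rewrite ffunE u_w.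
by rewrite addnAC.
Qed.

Lemma nactive_init j : nactive (init_config n j) = j.+1.
Proof.
rewrite /nactive /= (bigD1 ord0) //= ffunE eqxx big1 ?addn0 // => u /negbTE u0.
by rewrite ffunE u0.
Qed.

Lemma chosen_active (r : rule n) hist (s : config n) : nactive s != 0%N ->
  (0 < s.1 (chosen r hist s))%N.
Proof.
move=> s_active; rewrite /chosen; case: ifP => // _.
case: pickP => [//|none]; move: s_active; rewrite /nactive big1 // => u _.
by apply/eqP; rewrite -leqn0 leqNgt none.
Qed.

End CompleteGraph.

Section HitProbability.
Variables (R : realType) (n : nat) (p : R) (q : nat -> R) (r : rule n).

Definition move_hitprob t hist (s : config n) v w : R :=
  if w \in s.2 then hitprob p q r t (rcons hist s) (addat (remat s.1 v) w 1, s.2)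
  else limn (series (fun j =>
         q j * hitprob p q r t (rcons hist s) (addat (remat s.1 v) w j.+1, w |: s.2))).

Lemma hitprobS t hist s : hitprob p q r t.+1 hist s =
  if nactive s == 0%N then 1 else
  (1 - p) * hitprob p q r t (rcons hist s) (remat s.1 (chosen r hist s), s.2)
  + p * \sum_(w < n.+1 | w != chosen r hist s)
          n%:R^-1 * move_hitprob t hist s (chosen r hist s) w.
Proof. by []. Qed.

Hypotheses (p01 : 0 <= p <= 1) (q_ge0 : forall j, 0 <= q j)
  (q_le1 : forall N, series q N <= 1).

Lemma hitprob_ge0_le1 t hist s : 0 <= hitprob p q r t hist s <= 1.
Proof.
have /andP[p_ge0 p_le1] := p01.
elim: t hist s => [|t IH] hist s; first by rewrite /= lexx ler01.
rewrite hitprobS; case: eqP => _; first by rewrite ler01 lexx.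
set v := chosen r hist s; set B := \sum_(w < n.+1 | w != v) _.
have move01 w : 0 <= move_hitprob t hist s v w <= 1.
  rewrite /move_hitprob; case: ifP => _ //.
  apply: limn_series_ge0_le => [j|N].
    have /andP[h_ge0 _] := IH (rcons hist s) (addat (remat s.1 v) w j.+1, w |: s.2).
    exact: mulr_ge0.
  apply: le_trans (q_le1 N); apply: ler_sum => j _; have := q_ge0 j.
  by case/andP: (IH (rcons hist s) (addat (remat s.1 v) w j.+1, w |: s.2)); nra.
have /andP[B_ge0 B_le1] : 0 <= B <= 1.
  apply/andP; split.
    by apply: sumr_ge0 => w _; have /andP[+ _] := move01 w; apply: mulr_ge0.
  apply: le_trans (_ : \sum_(w < n.+1 | w != v) n%:R^-1 <= 1).
    apply: ler_sum => w _; have /andP[_ h_le1] := move01 w.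
    by rewrite -[leRHS]mulr1 ler_wpM2l ?invr_ge0.
  by rewrite sumr_neq_const; case: (n) => [|m]; rewrite ?mulr0 ?ler01 ?mulVf.
have /andP[] := IH (rcons hist s) (remat s.1 v, s.2); nra.
Qed.

Variables (x : R) (M : nat).
Hypotheses (x01 : 0 <= x <= 1) (n_gt0 : (0 < n)%N).

(* One-round supermartingale condition for [x ^+ nactive] when [m] vertices
   have been visited. *)
Hypothesis drift : forall m, (m < M)%N ->
  1 - p <= p * ((n%:R - m%:R) / n%:R * ((1 - x) * (1 - q 0%N))) * x.

Lemma move_hitprob_le t (hist : seq (config n)) (s : config n) :
  (#|s.2| + t < M)%N -> nactive s != 0%N ->
  (forall hist' (s' : config n), (#|s'.2| + t <= M)%N ->
     hitprob p q r t hist' s' <= x ^+ nactive s') ->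
  forall w, move_hitprob t hist s (chosen r hist s) w
    <= x ^+ nactive s * (if w \in s.2 then 1 else 1 - (1 - x) * (1 - q 0%N)).
Proof.
move=> lt_M s_active IH w; set v := chosen r hist s.
have v_active := chosen_active r hist s_active.
have nactive_move k S : nactive (addat (remat s.1 v) w k.+1, S) = (nactive s + k)%N.
  rewrite nactive_addat nactive_remat // addnS -addSn prednK //.
  by case: (s) s_active => a S'; rewrite lt0n.
rewrite /move_hitprob; case: ifP => w_visited.
  rewrite mulr1 -(addn0 (nactive s)) -(nactive_move 0%N s.2); apply: IH; exact: ltnW.
apply: limn_series_le_pgf => // j.
have /andP[h_ge0 _] :=
  hitprob_ge0_le1 t (rcons hist s) (addat (remat s.1 v) w j.+1, w |: s.2).
rewrite mulr_ge0 // ler_wpM2l // -(nactive_move j (w |: s.2)); apply: IH.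
by rewrite /= cardsU1 w_visited; lia.
Qed.

Lemma supermartingale_step (h B y K : R) : 0 <= y -> h <= y ->
  B <= x * y * (1 - K) -> 1 - p <= p * K * x -> (1 - p) * h + p * B <= x * y.
Proof.
move=> y_ge0 h_le B_le drift_K; have /andP[p_ge0 p_le1] := p01.
have /andP[x_ge0 _] := x01.
have : (1 - p) * h <= p * K * x * y.
  by apply: le_trans (ler_wpM2r y_ge0 drift_K); rewrite ler_wpM2l ?subr_ge0.
have : p * B <= p * (x * y * (1 - K)) by rewrite ler_wpM2l.
have : p * (x * y) <= x * y by rewrite ler_piMl // mulr_ge0.
lra.
Qed.

Lemma hitprob_le_pow t (hist : seq (config n)) (s : config n) :
  (#|s.2| + t <= M)%N -> hitprob p q r t hist s <= x ^+ nactive s.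
Proof.
have /andP[x_ge0 _] := x01.
elim: t hist s => [|t IH] hist s le_M; first exact: exprn_ge0.
rewrite hitprobS; case: eqP => [->|/eqP s_active]; first by rewrite expr0.
set v := chosen r hist s; set D := (1 - x) * (1 - q 0%N).
set K := (n%:R - #|s.2|%:R) / n%:R * D.
have q0_le1 : q 0%N <= 1 by have := q_le1 1%N; rewrite /series /= big_nat1.
have D_ge0 : 0 <= D by apply: mulr_ge0; rewrite subr_ge0 //; case/andP: x01.
have nactive_pos : nactive s = (nactive s).-1.+1 by rewrite prednK // lt0n.
rewrite nactive_pos exprS; apply: (@supermartingale_step _ _ _ K).
- exact: exprn_ge0.
- have -> : (nactive s).-1 = nactive (remat s.1 v, s.2).
    by rewrite nactive_remat ?chosen_active // -surjective_pairing.
  by apply: IH; apply: leq_trans le_M; rewrite addnS.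
- rewrite -exprS -nactive_pos.
  apply: le_trans (_ : x ^+ nactive s * (n%:R^-1 * \sum_(w < n.+1 | w != v)
                         (if w \in s.2 then 1 else 1 - D)) <= _).
    rewrite mulrCA !big_distrr /=; apply: ler_sum => w _.
    rewrite ler_wpM2l ?invr_ge0 //.
    by apply: move_hitprob_le => //; rewrite -addnS.
  by rewrite ler_wpM2l ?exprn_ge0 ?mean_neighbour_le.
- by apply: drift; lia.
Qed.

End HitProbability.

Lemma k1_natr_le (R : realType) (c : R) n m : 0 <= c -> (m <= k1 c n)%N ->
  m%:R <= c * n%:R.
Proof.
move=> c_ge0 le_mk; have cn_ge0 : 0 <= c * n%:R by rewrite mulr_ge0.
apply: le_trans (_ : (Num.truncn (c * n%:R))%:R <= _); last by rewrite truncn_le.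
by rewrite ler_nat (leq_trans le_mk) ?leq_pred.
Qed.

Lemma drift_of_fresh_fraction (R : realType) (n m : nat) (p c D : R) :
  (0 < n)%N -> m%:R <= c * n%:R -> 0 <= p -> 0 <= D ->
  1 - p <= p * (1 - c) * D -> 1 - p <= p * ((n%:R - m%:R) / n%:R * D).
Proof.
move=> n_gt0 le_m p_ge0 D_ge0; have n_pos : 0 < n%:R :> R by rewrite ltr0n.
move/le_trans; apply; rewrite -mulrA ler_wpM2l // ler_wpM2r //.
by rewrite ler_pdivlMr //; lra.
Qed.

Lemma prob_R_lt_k1_le (R : realType) n (p : R) q (r : rule n) (c x : R) :
  (0 < n)%N -> 0 <= p <= 1 -> 0 <= x <= 1 -> 0 <= c ->
  (forall j, 0 <= q j) -> (forall N, series q N <= 1) ->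
  1 - p <= p * ((1 - c) * ((1 - x) * (1 - q 0%N)) * x) ->
  0 <= prob_R_lt p q r (k1 c n) <= x.
Proof.
move=> n_gt0 p01 x01 c_ge0 q_ge0 q_le1 drift_c; have /andP[x_ge0 x_le1] := x01.
have /andP[p_ge0 _] := p01.
have q0_le1 : q 0%N <= 1 by have := q_le1 1%N; rewrite /series /= big_nat1.
have drift m : (m < (k1 c n).+1)%N ->
    1 - p <= p * ((n%:R - m%:R) / n%:R * ((1 - x) * (1 - q 0%N))) * x.
  rewrite ltnS => /(k1_natr_le c_ge0) le_m.
  have := drift_of_fresh_fraction (D := (1 - x) * (1 - q 0%N) * x) n_gt0 le_m p_ge0.
  by rewrite !mulrA; apply; rewrite ?mulr_ge0 ?subr_ge0 //; move: drift_c; rewrite !mulrA.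
have hit_le_x j : hitprob p q r (k1 c n) [::] (init_config n j) <= x.
  apply: le_trans (hitprob_le_pow r p01 q_ge0 q_le1 x01 n_gt0 drift [::] _) _.
    by rewrite /= cards1.
  by rewrite nactive_init exprS -[leRHS]mulr1 ler_wpM2l // exprn_ile1.
apply: limn_series_ge0_le => [j|N].
  have /andP[h_ge0 _] := hitprob_ge0_le1 r p01 q_ge0 q_le1 (k1 c n) [::] (init_config n j).
  exact: mulr_ge0.
apply: le_trans (_ : x * series q N <= x); last by rewrite -[leRHS]mulr1 ler_wpM2l.
rewrite /series /= big_distrr /=; apply: ler_sum => j _.
by rewrite mulrC ler_wpM2r.
Qed.

Lemma near_one_sub_le_mul (R : realType) (p : nat -> R) (K : R) :
  p @ \oo --> (1 : R) -> 0 < K -> \forall n \near \oo, 1 - p n <= p n * K.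
Proof.
move=> p_cvg K_gt0; pose d := Num.min (K / 2) (1 / 2).
have d_gt0 : 0 < d by rewrite lt_min; apply/andP; split; lra.
have [d_le_K d_le_half] : d <= K / 2 /\ d <= 1 / 2 by rewrite !ge_min !lexx ?orbT.
near=> n; have : `|1 - p n| <= d by near: n; apply: (cvgrPdist_le _ _).1 p_cvg d d_gt0.
rewrite ler_norml => /andP[_ p_close]; nra.
Unshelve. all: by end_near. Qed.

Unset Implicit Arguments.

Theorem lemma2p4 (R : realType) (q : nat -> R) (p : nat -> R) (c : R)
  (r : forall n : nat, rule n)
  (hq0 : forall j, 0 <= q j) (hq1 : series q @ \oo --> (1:R)) (hq0lt1 : q 0%N < 1)
  (hp : forall n, 0 < p n <= 1) (hp1 : p @ \oo --> (1:R))
  (hc : 0 < c < 1) :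
  (fun n => prob_R_lt (p n) q (r n) (k1 c n)) @ \oo --> (0:R).
Proof.
have q_le1 := series_le_lim hq0 hq1; have /andP[c_gt0 c_lt1] := hc.
apply/cvgr0Pnorm_le => e e_gt0.
pose x := Num.min e (1 / 2); pose D := (1 - x) * (1 - q 0%N).
have x_gt0 : 0 < x by rewrite lt_min e_gt0; lra.
have [x_le_e x_le_half] : x <= e /\ x <= 1 / 2 by rewrite !ge_min !lexx ?orbT.
have K_gt0 : 0 < (1 - c) * D * x by rewrite !mulr_gt0 //; lra.
near=> n.
have /andP[pn_gt0 pn_le1] := hp n.
have /andP[prob_ge0 prob_le_x] : 0 <= prob_R_lt (p n) q (r n) (k1 c n) <= x.
  apply: prob_R_lt_k1_le => //.
  - by near: n; exact: nbhs_infty_gt.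
  - by rewrite pn_le1 ltW.
  - by apply/andP; split; lra.
  - exact: ltW.
  - by near: n; exact: near_one_sub_le_mul.
by rewrite ger0_norm // (le_trans prob_le_x).
Unshelve. all: by end_near. Qed.
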